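(* For every $x\in\Sigma$ and $a,b\in\Sigma\setminus\{x\}$, $K_{x,a,b}\subseteq\Sigma^*\setminus L_{\mathrm{UNIQ}}$; that is, no string in $K_{x,a,b}$ is uniquely decodable from its bigram counts.
   Context: Let $\Sigma$ be a finite alphabet and $\$\notin\Sigma$ a delimiter symbol; $\Sigma_\$=\Sigma\cup\{\$\}$. The bigram map $\Phi$ sends a string $z\in\$\Sigma^*\$$ to the vector $\Phi(z)\in\mathbb{N}^{\Sigma_\$^2}$ whose $(i,j)$ entry is the number of positions at which the two-letter string $ij$ occurs as a contiguous factor of $z$ (counting overlaps). $L_{\mathrm{UNIQ}}$ is the set of $w\in\Sigma^*$ such that the only $z\in\$\Sigma^*\$$ with $\Phi(z)=\Phi(\$w\$)$ is $z=\$w\$$. For $x\in\Sigma$ write $\Sigma_{\neg x}=\Sigma\setminus\{x\}$. For $x\in\Sigma$ and $a,b\in\Sigma_{\neg x}$ (with $a=b$ allowed) define $I_{x,a,b}=\Sigma^*\,a\,x\,\Sigma_{\neg a}^*\,b\,\Sigma^*$, $J_{x,a,b}=\Sigma^*\,a\,\Sigma_{\neg x}^*\,b\,\Sigma^*$ (regular-expression notation), and $K_{x,a,b}=I_{x,a,b}\cap J_{x,a,b}$. *)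

From mathcomp Require Import all_boot.
Set Implicit Arguments. Unset Strict Implicit. Unset Printing Implicit Defensive.

(* The extended alphabet Sigma_$ is [option S]; [None] plays the role of $. *)

Definition bigram (T : eqType) (z : seq T) (i j : T) : nat :=
  count (pred1 (i, j)) (zip z (behead z)).

Definition delim (S : Type) (w : seq S) : seq (option S) :=
  None :: rcons (map Some w) None.

Definition same_bigrams (T : eqType) (z z' : seq T) : Prop :=
  forall i j : T, bigram z i j = bigram z' i j.

Definition L_UNIQ (S : eqType) (w : seq S) : Prop :=
  forall w' : seq S, same_bigrams (delim w') (delim w) -> delim w' = delim w.

Definition in_I (S : eqType) (x a b : S) (s : seq S) : Prop :=
  exists u v w : seq S, s = u ++ [:: a; x] ++ v ++ b :: w /\ a \notin v.

Definition in_J (S : eqType) (x a b : S) (s : seq S) : Prop :=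
  exists u v w : seq S, s = u ++ a :: v ++ b :: w /\ x \notin v.

Definition in_K (S : eqType) (x a b : S) (s : seq S) : Prop :=
  in_I x a b s /\ in_J x a b s.

From mathcomp Require Import all_boot.

Set Implicit Arguments.
Unset Strict Implicit.

(* Read a word z as a walk on its letters; its bigram vector is the multiset
   of steps [zip z (behead z)].  If z = U c B C D W where B and D both lead
   from c to d and C leads back from d to c, then the two detours B and D can
   be exchanged without changing the multiset of steps (swap_same_bigrams);
   when B and D start with different letters this yields a second word with
   the same bigram vector (swap_not_uniq).

   For s in K_{x,a,b} we have two occurrences of the letter a: s = u a P w
   with P = x v b and a not in x v (from I), and s = u' a Q w' with
   Q = v' b and x not in Q (from J).  They are distinct occurrences since
   P starts with x and Q does not (occurrence_cases).  Whichever comes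
   first, the second one lies at or after the last letter b of the first
   path (later_pivot, earlier_pivot), so s has the shape U a B C D W above
   with {B, D} = {P, Q}, c = a and d = b. *)

Section Steps.

Variable T : eqType.
Implicit Types (c d : T) (s A B C D U W : seq T).

Definition steps s : seq (T * T) := zip s (behead s).

Lemma bigramE s i j : bigram s i j = count (pred1 (i, j)) (steps s).
Proof. by []. Qed.

Lemma steps_cons_cat c A B :
  steps (c :: A ++ B) = steps (c :: A) ++ steps (last c A :: B).
Proof. by elim: A c => [|y A IH] c //=; rewrite -IH. Qed.

Lemma steps_cat_cons U c A :
  steps (U ++ c :: A) = steps (rcons U c) ++ steps (c :: A).
Proof. by case: U => [|y U] //=; rewrite -cat_rcons steps_cons_cat last_rcons. Qed.

Lemma swap_same_bigrams c d U B C D W :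
  last c B = d -> last d C = c -> last c D = d ->
  same_bigrams (U ++ c :: D ++ C ++ B ++ W) (U ++ c :: B ++ C ++ D ++ W).
Proof.
move=> eB eC eD i j; rewrite !bigramE; apply/permP.
rewrite !steps_cat_cons !steps_cons_cat ?eD ?eB ?eC ?eD ?eB perm_cat2l.
by rewrite perm_catCA perm_sym perm_catCA perm_cat2l perm_catCA.
Qed.

End Steps.

Lemma delim_inj (S : eqType) : injective (@delim S).
Proof. by move=> w w' [] /rcons_inj[] /(inj_map (@Some_inj _)). Qed.

Lemma delim_cat_cons (S : eqType) (c : S) (U B C D W : seq S) :
  delim (U ++ c :: B ++ C ++ D ++ W) =
  (None :: map Some U) ++ Some c ::
    map Some B ++ map Some C ++ map Some D ++ rcons (map Some W) None.
Proof. by rewrite /delim map_cat /= !map_cat !rcons_cat /= !rcons_cat. Qed.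

Lemma swap_not_uniq (S : eqType) (c d y z : S) (U B C D W : seq S) :
  y != z -> last c (y :: B) = d -> last d C = c -> last c (z :: D) = d ->
  ~ L_UNIQ (U ++ c :: (y :: B) ++ C ++ (z :: D) ++ W).
Proof.
move=> yz eB eC eD uniq_s.
have lift (e f : S) A : last e A = f -> last (Some e) (map Some A) = Some f.
  by rewrite last_map => ->.
have /uniq_s/delim_inj :
    same_bigrams (delim (U ++ c :: (z :: D) ++ C ++ (y :: B) ++ W))
                 (delim (U ++ c :: (y :: B) ++ C ++ (z :: D) ++ W)).
  by rewrite !delim_cat_cons; apply: (@swap_same_bigrams _ _ (Some d)); apply: lift.
move/(congr1 (drop (size U))); rewrite !drop_size_cat // => -[] zy.
by rewrite zy eqxx in yz.
Qed.

Section Occurrences.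

Variable T : eqType.
Implicit Types (c d y : T) (m t u w C M P Q : seq T).

Lemma occurrence_cases c u P u' Q :
  u ++ c :: P = u' ++ c :: Q ->
  [\/ exists2 m, u' = u ++ c :: m & P = m ++ c :: Q,
       P = Q
     | exists2 m, u = u' ++ c :: m & Q = m ++ c :: P].
Proof.
elim: u u' => [|z u IH] [|z' u'] /=.
- by case=> ->; apply: Or32.
- by case=> -> ->; apply: Or31; exists u'.
- by case=> -> <-; apply: Or33; exists u.
- case=> -> /IH [[m -> ->]| -> | [m -> ->]].
  + by apply: Or31; exists m.
  + exact: Or32.
  + by apply: Or33; exists m.
Qed.

Lemma prefix_before_absent y P w M t :
  y \notin P -> P ++ w = M ++ y :: t -> exists C, M = P ++ C.
Proof.
elim: P M => [|z P IH] M; first by exists M.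
case: M => [|z' M] /=.
- by rewrite in_cons => /norP[/negbTE zy _] [ezy]; rewrite ezy eqxx in zy.
- rewrite in_cons => /norP[_ yP] [-> /(IH _ yP)] [C ->].
  by exists C.
Qed.

Lemma later_pivot c d P w m t :
  c \notin P -> rcons P d ++ w = m ++ c :: t ->
  exists2 C, w = C ++ t & last d C = c.
Proof.
move=> cP; rewrite cat_rcons => /[dup] e /(prefix_before_absent cP) [C0 eC0].
move: e; rewrite {m}eC0 -catA => /(congr1 (drop (size P))); rewrite !drop_size_cat //.
case: C0 => [|e C0] /= [dc ->]; first by exists [::].
by exists (rcons C0 c); rewrite ?cat_rcons ?last_rcons.
Qed.

Lemma earlier_pivot c d y Q P w m t :
  y \notin Q -> last c Q = d -> Q ++ w = m ++ c :: (y :: P) ++ t ->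
  exists2 C, w = C ++ (y :: P) ++ t & last d C = c.
Proof.
move=> yQ eQ; rewrite -cat_rcons => /[dup] e /(prefix_before_absent yQ) [C eC].
exists C; last by rewrite -eQ -last_cat -eC last_rcons.
by move: e; rewrite eC -catA => /(congr1 (drop (size Q))); rewrite !drop_size_cat.
Qed.

End Occurrences.

Theorem lemma1 (S : finType) (x a b : S) :
  a != x -> b != x ->
  forall s : seq S, in_K x a b s -> ~ L_UNIQ s.
Proof.
move=> ax bx s [[u [v [w [eI a_v]]]] [u' [v' [w' [eJ x_v']]]]].
have [y [Q eQ]] : exists y Q, rcons v' b = y :: Q.
  by exists (head b v'), (behead (rcons v' b)); apply: headI.
have sI : s = u ++ a :: (x :: rcons v b) ++ w by rewrite eI /= cat_rcons.
have sJ : s = u' ++ a :: (y :: Q) ++ w' by rewrite eJ -[v' ++ _]cat_rcons eQ.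
have a_xv : a \notin x :: v by rewrite in_cons negb_or ax.
have x_yQ : x \notin y :: Q by rewrite -eQ mem_rcons in_cons negb_or eq_sym bx.
have xy : x != y by move: x_yQ; rewrite in_cons negb_or => /andP[].
have lastI : last a (x :: rcons v b) = b by rewrite /= last_rcons.
have lastJ : last a (y :: Q) = b by rewrite -eQ /= last_rcons.
case: (occurrence_cases (etrans (esym sI) sJ)) => [[m _ eIJ] | [exy _] | [m _ eJI]].
- have [C ew lastC] := later_pivot a_xv eIJ.
  by rewrite sI ew; apply: (swap_not_uniq xy lastI lastC lastJ).
- by rewrite exy eqxx in xy.
- have [C ew lastC] := earlier_pivot x_yQ lastJ eJI.
  by rewrite sJ ew; apply: (swap_not_uniq _ lastJ lastC lastI); rewrite eq_sym.
Qed.
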